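(* For every $i\in\{1,\dots,m-1\}$, every real $\varphi$ and every real $d$ (of either sign), there exist finite activation sequences (compositions of the moves $f_1(\cdot),\dots,f_m(\cdot)$ with positive arguments) realizing $h_i(\varphi)$ and $g_i(d)$, respectively.
   Context: A swarm of $n$ planar robots; robot $j$ has state $(x_j,y_j,\theta_j)$, $\theta_j$ mod $2\pi$; all robots have the same turning radius $r>0$. Groups $G_1,\dots,G_m$ with activation vectors $\alpha_i\in\{0,1\}^n$ ($\alpha_{i,j}=1$ iff robot $j\in G_i$); the patterns $(\alpha_{1,j},\dots,\alpha_{m-1,j})$ are pairwise distinct, none all zeros, none all ones; $G_m=\emptyset$. Dynamics: one group $\nu(t)$ active at a time, input $u(t)>0$; with $a_j=\alpha_{\nu(t),j}$: $\dot x_j=a_j\cos\theta_j u$, $\dot y_j=a_j\sin\theta_j u$, $\dot\theta_j=(1-a_j)u/r$. For $i<m$, $d>0$: $f_i(d)$ = activate $G_i$ with $\int u\,dt=d$ (members translate $d$ along heading, non-members rotate in place by $d/r$). For $\varphi>0$: $f_m(\varphi)$ = activate $G_m$ with $\int u\,dt=r\varphi$ (all robots rotate in place by $\varphi$). $h_i(\varphi)$: net effect in which members of $G_i$ are unchanged and non-members keep their positions with orientation increased by $\varphi$ mod $2\pi$. $g_i(d)$: net effect in which each member $j$ of $G_i$ is translated by $d(\cos\theta_j,\sin\theta_j)$ with unchanged orientation and non-members are unchanged. *)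

From Stdlib Require Import Reals List ZArith Lra.
Open Scope R_scope.

(* State of one robot: (x, y, theta). A configuration assigns a state to each
   robot index j (only j < n matters). *)
Record rstate := RState { rx : R; ry : R; rth : R }.
Definition config := nat -> rstate.

(* Activation pattern: alpha i j = true iff robot j belongs to group G_i. *)
Definition activation := nat -> nat -> bool.

(* Activating group i with total input  \int u dt = s  (a_j constant during the
   activation): members translate s along their (constant) heading, non-members
   rotate in place by s / r. *)
Definition flow (r : R) (alpha : activation) (i : nat) (s : R) (c : config) : config :=
  fun j => let st := c j in
    if alpha i j
    then RState (rx st + s * cos (rth st)) (ry st + s * sin (rth st)) (rth st)
    else RState (rx st) (ry st) (rth st + s / r).

(* The move f_i(a): for i < m, f_i(d) has \int u = d; f_m(phi) has \int u = r*phi. *)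
Definition move (r : R) (m : nat) (alpha : activation) (i : nat) (a : R)
  (c : config) : config :=
  if Nat.eqb i m then flow r alpha m (r * a) c else flow r alpha i a c.

Fixpoint run (r : R) (m : nat) (alpha : activation) (s : list (nat * R))
  (c : config) : config :=
  match s with
  | nil => c
  | (i, a) :: s' => run r m alpha s' (move r m alpha i a c)
  end.

Definition admissible (m : nat) (s : list (nat * R)) : Prop :=
  Forall (fun p => (1 <= fst p <= m)%nat /\ 0 < snd p) s.

Definition eq_mod2pi (a b : R) : Prop := exists k : Z, a = b + 2 * PI * IZR k.

Definition state_is (st : rstate) (x y th : R) : Prop :=
  rx st = x /\ ry st = y /\ eq_mod2pi (rth st) th.

Definition realizes_h (r : R) (n m : nat) (alpha : activation) (i : nat) (phi : R)
  (s : list (nat * R)) : Prop :=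
  forall c : config, forall j, (j < n)%nat ->
    let st := c j in
    let st' := run r m alpha s c j in
    if alpha i j then state_is st' (rx st) (ry st) (rth st)
    else state_is st' (rx st) (ry st) (rth st + phi).

Definition realizes_g (r : R) (n m : nat) (alpha : activation) (i : nat) (d : R)
  (s : list (nat * R)) : Prop :=
  forall c : config, forall j, (j < n)%nat ->
    let st := c j in
    let st' := run r m alpha s c j in
    if alpha i j
    then state_is st' (rx st + d * cos (rth st)) (ry st + d * sin (rth st)) (rth st)
    else state_is st' (rx st) (ry st) (rth st).

Definition valid_groups (n m : nat) (alpha : activation) : Prop :=
  (forall j j', (j < n)%nat -> (j' < n)%nat -> j <> j' ->
     exists k, (1 <= k <= m - 1)%nat /\ alpha k j <> alpha k j') /\
  (forall j, (j < n)%nat -> exists k, (1 <= k <= m - 1)%nat /\ alpha k j = true) /\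
  (forall j, (j < n)%nat -> exists k, (1 <= k <= m - 1)%nat /\ alpha k j = false) /\
  (forall j, alpha m j = false).

From Stdlib Require Import Reals List ZArith Lra Lia.
Import ListNotations.
Open Scope R_scope.

(* The move f_m(pi) reverses every robot.  Hence the "shuttle"
   f_i(a) f_m(pi) f_i(b) f_m(pi) carries each member of G_i forward by a and back
   by b, a net translation by a - b along its heading, while each non-member only
   turns, by (a + b)/r + 2 pi.  With a, b > 0 the difference a - b is arbitrary,
   and since orientations only matter mod 2 pi, a second shuttle (with a = b)
   turns the non-members by any prescribed angle.  Two shuttles therefore realize
   every combination of a translation of G_i and a rotation of its complement,
   in particular h_i(phi) and g_i(d). *)

Definition translate (a : R) (st : rstate) : rstate :=
  RState (rx st + a * cos (rth st)) (ry st + a * sin (rth st)) (rth st).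

Definition turn (a : R) (st : rstate) : rstate :=
  RState (rx st) (ry st) (rth st + a).

Definition state_equiv (st st' : rstate) : Prop :=
  state_is st (rx st') (ry st') (rth st').

Lemma translate0 (st : rstate) : translate 0 st = st.
Proof. destruct st; unfold translate; simpl; f_equal; ring. Qed.

Lemma turn0 (st : rstate) : turn 0 st = st.
Proof. destruct st; unfold turn; simpl; f_equal; ring. Qed.

Lemma turn_turn (a b : R) (st : rstate) : turn a (turn b st) = turn (b + a) st.
Proof. unfold turn; simpl; f_equal; ring. Qed.

Lemma turn_equiv (a b : R) (st : rstate) :
  eq_mod2pi a b -> state_equiv (turn a st) (turn b st).
Proof.
  intros [k Hk]; repeat split; simpl.
  exists k; rewrite Hk; ring.
Qed.

Lemma exists_pos_eq_mod2pi (phi : R) : exists psi, 0 < psi /\ eq_mod2pi psi phi.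
Proof.
  assert (HPI := PI_RGT_0).
  destruct (archimed (- phi / (2 * PI))) as [Hup _].
  set (k := up (- phi / (2 * PI))) in Hup.
  exists (phi + 2 * PI * IZR k); split; [|exists k; reflexivity].
  assert (Hk : 2 * PI * (- phi / (2 * PI)) < 2 * PI * IZR k)
    by (apply Rmult_lt_compat_l; lra).
  replace (2 * PI * (- phi / (2 * PI))) with (- phi) in Hk by (field; lra).
  lra.
Qed.

Lemma run_app r m alpha s1 s2 c :
  run r m alpha (s1 ++ s2) c = run r m alpha s2 (run r m alpha s1 c).
Proof. revert c; induction s1 as [|[i a] s1 IH]; intro c; simpl; auto. Qed.

Section Shuttle.

Variables (r : R) (m : nat) (alpha : activation).
Hypothesis r_gt0 : 0 < r.
Hypothesis alpha_m : forall j, alpha m j = false.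
Variable i : nat.
Hypothesis i_range : (1 <= i <= m - 1)%nat.

Lemma move_at (k : nat) (a : R) (c : config) (j : nat) :
  move r m alpha k a c j =
  if Nat.eqb k m then turn a (c j)
  else if alpha k j then translate a (c j) else turn (a / r) (c j).
Proof.
  unfold move, flow.
  destruct (Nat.eqb_spec k m) as [->|_]; [|reflexivity].
  rewrite alpha_m; unfold turn; do 2 f_equal; field; lra.
Qed.

Definition shuttle (a b : R) : list (nat * R) := [(i, a); (m, PI); (i, b); (m, PI)].

Lemma shuttle_admissible (a b : R) : 0 < a -> 0 < b -> admissible m (shuttle a b).
Proof.
  assert (HPI := PI_RGT_0).
  intros Ha Hb; repeat constructor; simpl; try lia; lra.
Qed.

Lemma run_shuttle (a b : R) (c : config) (j : nat) :
  run r m alpha (shuttle a b) c j =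
  if alpha i j then turn (2 * PI) (translate (a - b) (c j))
  else turn ((a + b) / r + 2 * PI) (c j).
Proof.
  assert (Him : Nat.eqb i m = false) by (apply Nat.eqb_neq; lia).
  simpl; rewrite !move_at, Him, Nat.eqb_refl.
  destruct (alpha i j); unfold turn, translate; simpl.
  - rewrite neg_cos, neg_sin; f_equal; ring.
  - f_equal; field; lra.
Qed.

Lemma effect_realizable (d phi : R) :
  exists s, admissible m s /\
  forall c j, state_equiv (run r m alpha s c j)
                (if alpha i j then translate d (c j) else turn phi (c j)).
Proof.
  set (a := Rmax d 0 + 1); set (b := a - d).
  assert (Ha : 0 < a) by (unfold a; pose proof (Rmax_r d 0); lra).
  assert (Hb : 0 < b) by (unfold b, a; pose proof (Rmax_l d 0); lra).
  destruct (exists_pos_eq_mod2pi (phi - (a + b) / r)) as [psi [Hpsi [k Hk]]].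
  set (e := r * psi / 2).
  assert (He : 0 < e) by (unfold e; pose proof (Rmult_lt_0_compat r psi); lra).
  exists (shuttle a b ++ shuttle e e); split.
  { apply Forall_app; split; apply shuttle_admissible; assumption. }
  intros c j; rewrite run_app, run_shuttle, run_shuttle.
  destruct (alpha i j).
  - replace (e - e) with 0 by ring; replace (a - b) with d by (unfold b; ring).
    rewrite translate0, turn_turn.
    rewrite <- (turn0 (translate d (c j))) at 2.
    apply turn_equiv; exists 2%Z; simpl; ring.
  - rewrite turn_turn; apply turn_equiv.
    exists (k + 2)%Z; rewrite plus_IZR; unfold e; simpl.
    field_simplify_eq; [|lra]. rewrite Hk; field; lra.
Qed.

End Shuttle.

Theorem mainTheorem3 (n m : nat) (r : R) (alpha : activation)
  (hr : 0 < r) (hg : valid_groups n m alpha) :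
  forall i : nat, (1 <= i <= m - 1)%nat ->
  (forall phi : R, exists s : list (nat * R),
      admissible m s /\ realizes_h r n m alpha i phi s) /\
  (forall d : R, exists s : list (nat * R),
      admissible m s /\ realizes_g r n m alpha i d s).
Proof.
  destruct hg as [_ [_ [_ alpha_m]]].
  intros i hi; split.
  - intro phi.
    destruct (effect_realizable r m alpha hr alpha_m i hi 0 phi) as [s [Hs Heff]].
    exists s; split; [exact Hs|]; intros c j _.
    specialize (Heff c j); destruct (alpha i j); [rewrite translate0 in Heff|]; exact Heff.
  - intro d.
    destruct (effect_realizable r m alpha hr alpha_m i hi d 0) as [s [Hs Heff]].
    exists s; split; [exact Hs|]; intros c j _.
    specialize (Heff c j); destruct (alpha i j); [|rewrite turn0 in Heff]; exact Heff.
Qed.
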